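(* Consider a finite super-modular game with player set $\mathcal V$ and binary action sets $\{\pm1\}$. Write $x\uparrow y$ ($x\downarrow y$) if $y$ is reachable from $x$ by a monotone (anti-monotone) I-path, and $x\to y$ if $y$ is reachable from $x$ by an I-path. Then for all $x,x',y,z\in\mathcal X$: (i) if $x\uparrow y$ and $x\uparrow z$, then $x\uparrow (y\vee z)$; (ii) if $x\downarrow y$ and $x\downarrow z$, then $x\downarrow(y\wedge z)$; (iii) if $x\uparrow y$ and $x'\ge x$, then $x'\uparrow(y\vee x')$; (iv) if $x\downarrow y$ and $x'\le x$, then $x'\downarrow(y\wedge x')$; (v) if $x\to y$, then there exist $y''\le y\le y'$ with $x\uparrow y'$ and $x\downarrow y''$. The same five statements hold with I-paths replaced throughout by BR-paths.
   Context: Game: finite player set $\mathcal V$, each player has action set $\{-1,+1\}$, configurations $x\in\mathcal X=\{-1,+1\}^{\mathcal V}$, utilities $u_i:\mathcal X\to\mathbb R$; write $u_i(x)=u_i(x_i,x_{-i})$. The game is super-modular if for every $i$, $u_i(1,x_{-i})-u_i(-1,x_{-i})\ge u_i(1,y_{-i})-u_i(-1,y_{-i})$ whenever $x_{-i}\ge y_{-i}$ (componentwise order). $x\vee y$, $x\wedge y$ are the entrywise max and min. Paths: a length-$l$ admissible path from $x$ to $y$ is $(x^{(0)},\dots,x^{(l)})$ with $x^{(0)}=x$, $x^{(l)}=y$, and for each $k=1,\dots,l$ a player $i_k$ with $x^{(k)}_{-i_k}=x^{(k-1)}_{-i_k}$ and $x^{(k)}_{i_k}\ne x^{(k-1)}_{i_k}$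 (length $0$ allowed). It is an I-path if $u_{i_k}(x^{(k)})>u_{i_k}(x^{(k-1)})$ for all $k$, a BR-path if $u_{i_k}(x^{(k)})\ge u_{i_k}(x^{(k-1)})$ for all $k$; monotone if $x^{(0)}\lneq x^{(1)}\lneq\cdots\lneq x^{(l)}$, anti-monotone if $x^{(0)}\gneq\cdots\gneq x^{(l)}$ (where $x\lneq y$ means $x\le y$, $x\neq y$). *)

From mathcomp Require Import all_boot all_order all_algebra.
Set Implicit Arguments. Unset Strict Implicit. Unset Printing Implicit Defensive.
Import Order.TTheory GRing.Theory Num.Theory.
Local Open Scope ring_scope.

(* Actions {-1,+1} are encoded as bool: false = -1, true = +1
   (so the order -1 < +1 becomes false < true).
   A configuration x in X = {-1,+1}^V is a finite function V -> bool. *)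
Definition config (V : finType) := {ffun V -> bool}.

Definition cle (V : finType) (x y : config V) : Prop := forall i, x i ==> y i.
Definition clt (V : finType) (x y : config V) : Prop := cle x y /\ x <> y.

Definition cjoin (V : finType) (x y : config V) : config V := [ffun i => x i || y i].
Definition cmeet (V : finType) (x y : config V) : config V := [ffun i => x i && y i].

Definition cupd (V : finType) (x : config V) (i : V) (b : bool) : config V :=
  [ffun j => if j == i then b else x j].

Definition supermodular (V : finType) (R : realFieldType) (u : V -> config V -> R) : Prop :=
  forall (i : V) (x y : config V),
    (forall j, j != i -> y j ==> x j) ->
    u i (cupd y i true) - u i (cupd y i false) <= u i (cupd x i true) - u i (cupd x i false).

(* one admissible step from x to x' via player i, improving (w = false: I-path,
   strict) or weakly improving (w = true: BR-path) player i's utility *)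
Definition istep (V : finType) (R : realFieldType) (u : V -> config V -> R) (w : bool)
  (x x' : config V) : Prop :=
  exists i : V, (forall j, j != i -> x' j = x j) /\ x' i != x i /\
    (if w then u i x <= u i x' else u i x < u i x').

Inductive reach (V : finType) (e : config V -> config V -> Prop) : config V -> config V -> Prop :=
| reach0 x : reach e x x
| reachS x y z : e x y -> reach e y z -> reach e x z.

Definition reach_any (V : finType) (R : realFieldType) (u : V -> config V -> R) (w : bool) :=
  reach (istep u w).
Definition reach_up (V : finType) (R : realFieldType) (u : V -> config V -> R) (w : bool) :=
  reach (fun x x' => istep u w x x' /\ clt x x').
Definition reach_down (V : finType) (R : realFieldType) (u : V -> config V -> R) (w : bool) :=
  reach (fun x x' => istep u w x x' /\ clt x' x).

From mathcomp Require Import all_boot all_order all_algebra.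
From mathcomp Require Import lra.
Import Order.TTheory GRing.Theory Num.Theory.
Local Open Scope ring_scope.
Set Implicit Arguments. Unset Strict Implicit.

(* The heart of the lemma is the lifting property (iii): a monotone improving
   path x = a_0 < a_1 < ... < a_l = y can be replayed from any x' >= x.  Each
   step raises one player i from -1 to +1; if x' already plays +1 at i the step
   is skipped, otherwise player i is raised in the current configuration, which
   dominates a_k, and super-modularity says the gain of raising i can only grow
   on a larger configuration, so the replayed step is improving as well.  The
   replayed path ends at y v x'.
   (i) follows by first going x -> z and then lifting x -> y from z >= x.
   The anti-monotone statements (ii), (iv) are not proved again: negating every
   action reverses the order, swaps v and ^, and turns u into a super-modular
   game whose monotone paths are the anti-monotone paths of u.
   Finally (v) is an induction on the I-path (resp. BR-path): every step goes
   up or down, and the step in the opposite direction is absorbed by (iii) or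
   (iv) into the bound obtained for the rest of the path. *)

Lemma reach_trans (V : finType) (e : config V -> config V -> Prop) x y z :
  reach e x y -> reach e y z -> reach e x z.
Proof. by elim=> // a b c hab _ IH /IH; apply: reachS. Qed.

Lemma reach_map (V : finType) (e1 e2 : config V -> config V -> Prop)
    (f : config V -> config V) :
  (forall a b, e1 a b -> e2 (f a) (f b)) ->
  forall x y, reach e1 x y -> reach e2 (f x) (f y).
Proof.
by move=> hf x y; elim=> [a|a b c /hf hab _ IH]; [apply: reach0|apply: reachS IH].
Qed.

Section Configurations.
Variable V : finType.
Implicit Types (x y a : config V) (i j : V) (b : bool).

Lemma cle_refl x : cle x x.
Proof. by move=> i; apply/implyP. Qed.

Lemma cle_trans x y a : cle x y -> cle y a -> cle x a.
Proof. by move=> h1 h2 i; move: (h1 i) (h2 i); case: (x i); case: (y i). Qed.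

Lemma cle_joinl x y : cle x (cjoin x y).
Proof. by move=> i; rewrite ffunE; apply/implyP=> ->. Qed.

Lemma cle_meetl x y : cle (cmeet x y) x.
Proof. by move=> i; rewrite ffunE; apply/implyP=> /andP[]. Qed.

Lemma cjoin_idl x y : cle x y -> cjoin x y = y.
Proof. by move=> h; apply/ffunP=> i; rewrite ffunE; move: (h i); case: (x i). Qed.

Lemma cupd_at x i b : cupd x i b i = b.
Proof. by rewrite ffunE eqxx. Qed.

Lemma cupd_ne x i j b : j != i -> cupd x i b j = x j.
Proof. by move=> h; rewrite ffunE (negbTE h). Qed.

Lemma cupd_id x i b : x i = b -> cupd x i b = x.
Proof. by move=> h; apply/ffunP=> j; rewrite ffunE; case: eqP => // ->. Qed.

Lemma cupd_of_diff x y i :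
  (forall j, j != i -> y j = x j) -> y = cupd x i (y i).
Proof.
by move=> h; apply/ffunP=> j; rewrite ffunE; case: ifP => [/eqP ->|/negbT/h ->].
Qed.

Lemma cle_cupd x y i b : cle x y -> cle (cupd x i b) (cupd y i b).
Proof. by move=> h j; rewrite !ffunE; case: eqP => _; [rewrite implybb|apply: h]. Qed.

Lemma cjoin_cupd_true x y i : y i = true -> cjoin y (cupd x i true) = cjoin y x.
Proof. by move=> h; apply/ffunP=> j; rewrite !ffunE; case: eqP => // ->; rewrite h. Qed.

Lemma clt_cupd_true x i : x i = false -> clt x (cupd x i true).
Proof.
move=> h; split; first by move=> j; rewrite ffunE; case: eqP => // _; apply/implyP.
by move/(congr1 (fun c : config V => c i)); rewrite cupd_at h.
Qed.

Definition cflip x : config V := [ffun i => ~~ x i].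

Lemma cflipK : involutive cflip.
Proof. by move=> x; apply/ffunP=> i; rewrite !ffunE negbK. Qed.

Lemma cflip_cle x y : cle (cflip x) (cflip y) <-> cle y x.
Proof.
by split=> h i; move: (h i); rewrite ?ffunE; case: (x i); case: (y i).
Qed.

Lemma cflip_clt x y : clt (cflip x) (cflip y) <-> clt y x.
Proof.
rewrite /clt cflip_cle; split=> -[h ne]; split=> // e; apply: ne; first by rewrite e.
by rewrite -(cflipK x) e cflipK.
Qed.

Lemma cflip_cupd x i b : cflip (cupd x i b) = cupd (cflip x) i (~~ b).
Proof. by apply/ffunP=> j; rewrite !ffunE; case: eqP. Qed.

Lemma cflip_meet x y : cflip (cmeet x y) = cjoin (cflip x) (cflip y).
Proof. by apply/ffunP=> i; rewrite !ffunE negb_and. Qed.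

End Configurations.

Section Game.
Variables (V : finType) (R : realFieldType).
Implicit Types (u : V -> config V -> R) (x y a : config V) (i : V).

Definition improves u (w : bool) i x y : Prop :=
  if w then u i x <= u i y else u i x < u i y.

Lemma improves_raise_lift u w a x' i : supermodular u ->
  cle a x' -> a i = false -> x' i = false ->
  improves u w i a (cupd a i true) -> improves u w i x' (cupd x' i true).
Proof.
move=> hsm hax' hai hx'i; have := hsm i x' a (fun j _ => hax' j).
rewrite (cupd_id hai) (cupd_id hx'i) /improves.
by case: w => ? ?; lra.
Qed.

Lemma istep_raise u w x i : x i = false ->
  improves u w i x (cupd x i true) ->
  istep u w x (cupd x i true) /\ clt x (cupd x i true).
Proof.
move=> hxi himp; split; last exact: clt_cupd_true.
exists i; split; first by move=> j /cupd_ne ->.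
by rewrite cupd_at hxi.
Qed.

Lemma istep_up_shape u w x x1 : istep u w x x1 -> cle x x1 ->
  exists i, [/\ x i = false, x1 = cupd x i true & improves u w i x x1].
Proof.
move=> [i [hother [hi himp]]] hle; exists i.
have hx1 := cupd_of_diff hother.
by move: (hle i) hi hx1; case: (x i); case: (x1 i).
Qed.

Lemma istep_dir u w x x1 : istep u w x x1 -> clt x x1 \/ clt x1 x.
Proof.
move=> [i [hother [hi _]]].
have hother' j : j != i -> x j = x1 j by move/hother.
case hxi: (x i) hi => hi.
  right; rewrite (cupd_of_diff hother') hxi; apply: clt_cupd_true.
  by move: hi; case: (x1 i).
left; rewrite (cupd_of_diff hother); move: hi.
by case: (x1 i) => // _; apply: clt_cupd_true.
Qed.

Lemma up_cle u w x y : reach_up u w x y -> cle x y.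
Proof.
elim=> [a|a a1 y' [_ [hle _]] _ IH]; first exact: cle_refl.
exact: cle_trans hle IH.
Qed.

(* Statement (iii): a monotone path from x can be replayed from any x' >= x,
   raising on the way only the players that still play -1. *)
Lemma reach_up_lift u w x y x' : supermodular u ->
  reach_up u w x y -> cle x x' -> reach_up u w x' (cjoin y x').
Proof.
move=> hsm hxy; elim: hxy x' => [a|a a1 y' [st lt] hy' IH] x' hax'.
  by rewrite cjoin_idl //; apply: reach0.
have [i [hai ha1 himp]] := istep_up_shape st (proj1 lt).
have hy'i : y' i = true by move: (up_cle hy' i); rewrite ha1 cupd_at.
have ha1x' : cle a1 (cupd x' i true) by rewrite ha1; apply: cle_cupd.
case hx'i: (x' i).
  by apply: IH; rewrite -(cupd_id hx'i).
rewrite -(cjoin_cupd_true x' hy'i); apply: reachS (IH _ ha1x').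
apply: istep_raise => //; rewrite ha1 in himp.
exact: improves_raise_lift hsm hax' hai hx'i himp.
Qed.

Definition uflip u : V -> config V -> R := fun i x => u i (cflip x).

(* Negation reverses both the order on configurations and the sign of the gain
   of raising a player, so the flipped game is again super-modular. *)
Lemma supermodular_flip u : supermodular u -> supermodular (uflip u).
Proof.
move=> hsm i x y hyx; rewrite /uflip !cflip_cupd /=.
have hflip j : j != i -> cflip x j ==> cflip y j by move/hyx; rewrite !ffunE implybNN.
by have := hsm i (cflip y) (cflip x) hflip; lra.
Qed.

Lemma istep_flip u w x x1 : istep (uflip u) w x x1 <-> istep u w (cflip x) (cflip x1).
Proof.
have flip_eq j : (cflip x1 j == cflip x j) = (x1 j == x j).
  by rewrite !ffunE (inj_eq negb_inj).
split=> -[i [hother [hi himp]]]; exists i; rewrite ?flip_eq in hi *; split=> //.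
  by move=> j /hother /eqP; rewrite -flip_eq => /eqP.
by move=> j /hother /eqP; rewrite flip_eq => /eqP.
Qed.

Lemma reach_down_flip u w x y :
  reach_down u w x y <-> reach_up (uflip u) w (cflip x) (cflip y).
Proof.
split.
  apply: reach_map => a b [st lt].
  by split; [apply/istep_flip; rewrite !cflipK|apply/cflip_clt].
rewrite -{2}(cflipK x) -{2}(cflipK y); apply: reach_map => a b [st lt].
by split; [apply/istep_flip|apply/cflip_clt].
Qed.

Lemma down_cle u w x y : reach_down u w x y -> cle y x.
Proof. by move/reach_down_flip/up_cle/cflip_cle. Qed.

Lemma reach_down_lift u w x y x' : supermodular u ->
  reach_down u w x y -> cle x' x -> reach_down u w x' (cmeet y x').
Proof.
move=> hsm /reach_down_flip hxy hx'x.
apply/reach_down_flip; rewrite cflip_meet.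
by apply: (reach_up_lift (supermodular_flip hsm) hxy); apply/cflip_cle.
Qed.

Lemma reach_any_bounds u w x y : supermodular u -> reach_any u w x y ->
  exists y' y'', cle y'' y /\ cle y y' /\ reach_up u w x y' /\ reach_down u w x y''.
Proof.
move=> hsm; elim=> [a|a a1 y0 st _ [y' [y'' [hy'' [hy' [hup hdown]]]]]].
  exists a, a; split; last split; [exact: cle_refl|exact: cle_refl|].
  by split; apply: reach0.
(* An upward first step extends the monotone path; the anti-monotone path from
   the next configuration is replaced by its lift (iv) below the start. *)
case: (istep_dir st) => lt.
  exists y', (cmeet y'' a); split; last split=> //.
    exact: cle_trans (cle_meetl _ _) hy''.
  split; first exact: reachS (conj st lt) hup.
  exact: reach_down_lift hsm hdown (proj1 lt).
exists (cjoin y' a), y''; split=> //; split; first exact: cle_trans hy' (cle_joinl _ _).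
by split; [apply: reach_up_lift hsm hup (proj1 lt)|apply: reachS (conj st lt) hdown].
Qed.

End Game.

Theorem lemma5 (V : finType) (R : realFieldType) (u : V -> config V -> R)
  (hsm : supermodular u) (w : bool) :
  (forall x y z : config V,
      reach_up u w x y -> reach_up u w x z -> reach_up u w x (cjoin y z)) /\
  (forall x y z : config V,
      reach_down u w x y -> reach_down u w x z -> reach_down u w x (cmeet y z)) /\
  (forall x x' y : config V,
      reach_up u w x y -> cle x x' -> reach_up u w x' (cjoin y x')) /\
  (forall x x' y : config V,
      reach_down u w x y -> cle x' x -> reach_down u w x' (cmeet y x')) /\
  (forall x y : config V,
      reach_any u w x y ->
      exists y' y'' : config V, cle y'' y /\ cle y y' /\
        reach_up u w x y' /\ reach_down u w x y'').
Proof.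
split.
  (* (i): go from x to z, then lift the path from x to y above z. *)
  move=> x y z hy hz; exact: reach_trans hz (reach_up_lift hsm hy (up_cle hz)).
split.
  move=> x y z hy hz; exact: reach_trans hz (reach_down_lift hsm hy (down_cle hz)).
split; first by move=> x x' y hy; apply: reach_up_lift hsm hy.
split; first by move=> x x' y hy; apply: reach_down_lift hsm hy.
by move=> x y; apply: reach_any_bounds.
Qed.
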